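(* Let $p$ be a prime and $s>1$, and let $F(x,y)$ be the formal group law of mod $p$ Morava $K$-theory $K(s)$. Then $$F(x,y)\equiv x+y-v_s\sum_{0<j<p}\frac1p\binom{p}{j}\bigl(x^{p^{s-1}}\bigr)^{j}\bigl(y^{p^{s-1}}\bigr)^{p-j}$$ modulo $x^{p^{2(s-1)}}$ (and likewise modulo $y^{p^{2(s-1)}}$).
   Context: The coefficient ring of $K(s)$ is $\mathbb{F}_p[v_s,v_s^{-1}]$, $|v_s|=2(p^s-1)$, and its formal group law is the mod $p$ reduction of the $p$-typical formal group law over $\mathbb{Z}_{(p)}[v_s]$ obtained from the universal $p$-typical formal group law $F_{BP}$ over $BP_*=\mathbb{Z}_{(p)}[v_1,v_2,\dots]$ (Hazewinkel generators) by setting $v_i=0$ for all $i\ne s$; its logarithm is $\sum_{k\ge0}v_s^{(p^{ks}-1)/(p^s-1)}x^{p^{ks}}/p^k$. Note $\frac1p\binom pj\in\mathbb{Z}$ for $0<j<p$. *)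

(* Bivariate formal power series over Q[v] are represented
   by their coefficient functions  nat -> nat -> {poly rat}  (coefficient of x^i y^j);
   the polynomial variable 'X plays the role of v_s. *)
From HB Require Import structures.
From mathcomp Require Import all_boot all_order all_algebra.
Set Implicit Arguments. Unset Strict Implicit. Unset Printing Implicit Defensive.
Import Order.TTheory GRing.Theory Num.Theory.
Local Open Scope ring_scope.

Definition ps2 := nat -> nat -> {poly rat}.

Definition ps2_one : ps2 := fun i j => ((i == 0%N) && (j == 0%N))%:R.
Definition ps2_X : ps2 := fun i j => ((i == 1%N) && (j == 0%N))%:R.
Definition ps2_Y : ps2 := fun i j => ((i == 0%N) && (j == 1%N))%:R.

Definition ps2_mul (A B : ps2) : ps2 := fun i j =>
  \sum_(a < i.+1) \sum_(b < j.+1) A a b * B (i - a)%N (j - b)%N.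

Definition ps2_exp (A : ps2) (n : nat) : ps2 := iter n (ps2_mul A) ps2_one.

Definition logcoef (p s k : nat) : {poly rat} :=
  'X ^+ ((p ^ (k * s) - 1) %/ (p ^ s - 1)) * ((p ^ k)%:R ^-1 : rat)%:P.

(* log(A) = sum_k logcoef k * A^(p^(ks)), for A without constant term;
   the terms with p^(ks) > i + j do not contribute to the (i,j) coefficient,
   so the sum is truncated at k <= i + j. *)
Definition log_of (p s : nat) (A : ps2) : ps2 := fun i j =>
  \sum_(k < (i + j).+1) logcoef p s k * ps2_exp A (p ^ (k * s)) i j.

(* F is the formal group law over Z_(p)[v_s] (viewed in Q[v_s]) with the
   given logarithm:  F(0,0) = 0 and  log(F(x,y)) = log x + log y. *)
Definition is_KsFGL (p s : nat) (F : ps2) : Prop :=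
  F 0%N 0%N = 0 /\
  forall i j, log_of p s F i j = log_of p s ps2_X i j + log_of p s ps2_Y i j.

Definition in_pZp (p : nat) (q : rat) : bool :=
  (p %| `|numq q|)%N && ~~ (p %| `|denq q|)%N.

(* a = b in Z_(p)[v]/(p) = F_p[v], i.e. a - b has all coefficients in p Z_(p). *)
Definition cong_mod_p (p : nat) (a b : {poly rat}) : Prop :=
  forall n, in_pZp p ((a - b)`_n).

Definition rhs (p s : nat) : ps2 := fun i j =>
  ps2_X i j + ps2_Y i j
  - 'X * \sum_(1 <= l < p)
          ((('C(p, l))%:R / p%:R : rat)%:P
           * ((i == p ^ (s - 1) * l)%N && (j == p ^ (s - 1) * (p - l))%N)%:R).

From HB Require Import structures.
From mathcomp Require Import all_boot all_order all_algebra.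
From mathcomp Require Import ring zify.
Set Implicit Arguments. Unset Strict Implicit. Unset Printing Implicit Defensive.
Import Order.TTheory GRing.Theory Num.Theory.
Local Open Scope ring_scope.

(* Two facts about G carry the
   argument: perturbing G by a multiple of p changes the nonlinear part of log G
   only by a multiple of p ([log_tail_perturb], from the Frobenius estimate
   [divp_trunc_powD]), and log G = log x + log y mod p modulo x^N ([log_tail_Gpoly]:
   the k = 1 term of the logarithm cancels - v C by the very definition of C, and
   the terms k >= 2 are divisible by p or by x^N).  Then F = G mod p is proved
   coefficientwise by strong induction on the total degree ([congruence_step],
   [KsFGL_congruence]), using that the nonlinear part of log F in degree t + 1 only
   depends on F in lower degrees ([log_tail_local]).  Existence of F follows from
   the same degree-wise recursion ([KsFGL]), and the statement modulo y^N follows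
   by exchanging x and y. *)

Section PAdicDivisibility.
Variables (p : nat) (p_prime : prime p).

Definition divp_rat (m : nat) (q : rat) : Prop :=
  exists (a : int) (b : nat), coprime b p /\ q * b%:R = (p ^ m)%:R * a%:~R.

Lemma divp_rat0 m : divp_rat m 0.
Proof. by exists 0, 1%N; rewrite mul0r mulr0 coprime1n. Qed.

Lemma divp_ratD m x y : divp_rat m x -> divp_rat m y -> divp_rat m (x + y).
Proof.
move=> [a [b [hb ex]]] [c [d [hd ey]]].
exists (a * d%:Z + c * b%:Z), (b * d)%N; rewrite coprimeMl hb hd.
split=> //; rewrite natrM.
transitivity ((x * b%:R) * d%:R + (y * d%:R) * b%:R); first ring.
by rewrite ex ey rmorphD !rmorphM /=; ring.
Qed.

Lemma divp_ratN m x : divp_rat m x -> divp_rat m (- x).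
Proof. by move=> [a [b [hb ex]]]; exists (- a), b; rewrite mulNr ex rmorphN mulrN. Qed.

Lemma divp_ratM m n x y : divp_rat m x -> divp_rat n y -> divp_rat (m + n) (x * y).
Proof.
move=> [a [b [hb ex]]] [c [d [hd ey]]].
exists (a * c), (b * d)%N; rewrite coprimeMl hb hd.
split=> //; rewrite natrM expnD natrM rmorphM /=.
transitivity ((x * b%:R) * (y * d%:R)); first ring.
by rewrite ex ey; ring.
Qed.

Lemma divp_rat_weaken m n x : (n <= m)%N -> divp_rat m x -> divp_rat n x.
Proof.
move=> le_nm [a [b [hb ex]]]; exists (a * (p ^ (m - n))%:R), b; split=> //.
rewrite ex -(subnKC le_nm) expnD natrM rmorphM /= subnKC // rmorph_nat; ring.
Qed.

Lemma divp_rat_nat m k : (p ^ m %| k)%N -> divp_rat m k%:R.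
Proof.
move=> /dvdnP [c ->]; exists c%:Z, 1%N; rewrite coprime1n.
by split=> //; rewrite mulr1 natrM mulrC -pmulrn.
Qed.

Lemma divp_rat_div m k x : divp_rat (m + k) x -> divp_rat m (x / (p ^ k)%:R).
Proof.
move=> [a [b [hb ex]]]; exists a, b; split=> //.
have pk_neq0 : (p ^ k)%:R != 0 :> rat by rewrite pnatr_eq0 -lt0n expn_gt0 prime_gt0.
by rewrite mulrAC ex expnD natrM; field.
Qed.

Lemma divp_rat1_in_pZp x : divp_rat 1 x -> in_pZp p x.
Proof.
move=> [a [b [hb ex]]]; move: hb; rewrite coprime_sym prime_coprime // => hb.
have key : (`|numq x| * b = p * `|a| * `|denq x|)%N.
  have E : (numq x)%:~R * b%:R = (p%:R * a%:~R) * (denq x)%:~R :> rat.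
    by rewrite numqE mulrAC ex expn1.
  have Ez : numq x * b%:Z = p%:Z * a * denq x.
    by apply: (@intr_inj rat); rewrite !rmorphM /= -E.
  by have := congr1 absz Ez; rewrite !abszM.
apply/andP; split.
  have : (p %| `|numq x| * b)%N by rewrite key -mulnA dvdn_mulr.
  by rewrite Euclid_dvdM // (negbTE hb) orbF.
apply/negP => p_den; apply: (negP hb).
have : (`|denq x| %| `|numq x| * b)%N by rewrite key dvdn_mull.
rewrite Gauss_dvdr; last by rewrite coprime_sym coprime_num_den.
exact: dvdn_trans.
Qed.

Definition divp_poly (m : nat) (a : {poly rat}) : Prop := forall n, divp_rat m a`_n.

Lemma divp_poly0 m : divp_poly m 0.
Proof. by move=> n; rewrite coef0; exact: divp_rat0. Qed.

Lemma divp_polyD m a b : divp_poly m a -> divp_poly m b -> divp_poly m (a + b).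
Proof. by move=> ha hb n; rewrite coefD; apply: divp_ratD. Qed.

Lemma divp_polyN m a : divp_poly m a -> divp_poly m (- a).
Proof. by move=> ha n; rewrite coefN; apply: divp_ratN. Qed.

Lemma divp_polyB m a b : divp_poly m a -> divp_poly m b -> divp_poly m (a - b).
Proof. by move=> ha hb; apply: divp_polyD => //; apply: divp_polyN. Qed.

Lemma divp_poly_weaken m n a : (n <= m)%N -> divp_poly m a -> divp_poly n a.
Proof. by move=> le_nm ha k; apply: divp_rat_weaken le_nm (ha k). Qed.

Lemma divp_poly_sum m I (r : seq I) (P : pred I) (F : I -> {poly rat}) :
  (forall i, P i -> divp_poly m (F i)) -> divp_poly m (\sum_(i <- r | P i) F i).
Proof. by apply: big_ind; [exact: divp_poly0|exact: divp_polyD]. Qed.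

Lemma divp_polyC m c : divp_rat m c -> divp_poly m c%:P.
Proof. by move=> hc n; rewrite coefC; case: (n == 0)%N => //; exact: divp_rat0. Qed.

Lemma divp_polyM m n a b : divp_poly m a -> divp_poly n b -> divp_poly (m + n) (a * b).
Proof.
move=> ha hb k; rewrite coefM.
have : divp_poly (m + n) (\sum_(j < k.+1) (a`_j * b`_(k - j))%:P).
  by apply: divp_poly_sum => j _; apply/divp_polyC/divp_ratM.
by move=> /(_ 0%N); rewrite coef_sum; under eq_bigr do rewrite coefC.
Qed.

Lemma divp_poly_nat m k : (p ^ m %| k)%N -> divp_poly m k%:R.
Proof. by move=> hk; rewrite -polyC_natr; apply/divp_polyC/divp_rat_nat. Qed.

Lemma divp_poly_logcoef s m k a :
  divp_poly (m + k) a -> divp_poly m (logcoef p s k * a).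
Proof.
move=> ha n; rewrite /logcoef -mulrA coefXnM coefCM.
by case: ifP => _; [exact: divp_rat0|rewrite mulrC; apply/divp_rat_div/ha].
Qed.

End PAdicDivisibility.

(* Bivariate power series over Q[v], truncated in x, are handled as elements of
   Q[v][y][x]: for A : P3 the coefficient of x^i y^j is A`_i`_j : {poly rat}. *)
Notation P3 := {poly {poly {poly rat}}}.

Lemma coef2M (A B : P3) i j :
  (A * B)`_i`_j = \sum_(a < i.+1) \sum_(b < j.+1) A`_a`_b * B`_(i - a)`_(j - b).
Proof. by rewrite coefM coef_sum; apply: eq_bigr => a _; rewrite coefM. Qed.

Lemma coef2CM (c : {poly rat}) (A : P3) i j : (c%:P%:P * A)`_i`_j = c * A`_i`_j.
Proof. by rewrite !coefCM. Qed.

Definition xx : P3 := 'X.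
Definition yy : P3 := 'X%:P.
Definition vv : P3 := 'X%:P%:P.

Section TruncatedDivisibility.
Variables (p N : nat) (p_prime : prime p).

Definition divp_trunc (m : nat) (A : P3) : Prop :=
  forall i j, (i < N)%N -> divp_poly p m A`_i`_j.

Lemma divp_trunc0 m : divp_trunc m 0.
Proof. by move=> i j _; rewrite !coef0; exact: divp_poly0. Qed.

Lemma divp_truncD m A B : divp_trunc m A -> divp_trunc m B -> divp_trunc m (A + B).
Proof. by move=> hA hB i j hi; rewrite !coefD; apply: divp_polyD; [apply: hA|apply: hB]. Qed.

Lemma divp_truncN m A : divp_trunc m A -> divp_trunc m (- A).
Proof. by move=> hA i j hi; rewrite !coefN; apply: divp_polyN; apply: hA. Qed.

Lemma divp_truncB m A B : divp_trunc m A -> divp_trunc m B -> divp_trunc m (A - B).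
Proof. by move=> hA hB; apply/divp_truncD/divp_truncN. Qed.

Lemma divp_trunc_weaken m n A : (n <= m)%N -> divp_trunc m A -> divp_trunc n A.
Proof. by move=> le_nm hA i j hi; apply: divp_poly_weaken le_nm (hA i j hi). Qed.

Lemma divp_trunc_sum m I (r : seq I) (P : pred I) (F : I -> P3) :
  (forall i, P i -> divp_trunc m (F i)) -> divp_trunc m (\sum_(i <- r | P i) F i).
Proof. by apply: big_ind; [exact: divp_trunc0|exact: divp_truncD]. Qed.

(* Truncation modulo x^N is compatible with products since x-degrees only add. *)
Lemma divp_truncM m n A B : divp_trunc m A -> divp_trunc n B -> divp_trunc (m + n) (A * B).
Proof.
move=> hA hB i j hi; rewrite coef2M.
apply: divp_poly_sum => a _; apply: divp_poly_sum => b _.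
apply: divp_polyM.
  by apply: hA; apply: leq_ltn_trans hi; rewrite -ltnS.
by apply: hB; apply: leq_ltn_trans hi; rewrite leq_subr.
Qed.

Lemma divp_truncC m c : divp_poly p m c -> divp_trunc m c%:P%:P.
Proof.
move=> hc i j _; rewrite coefC; case: (i == 0)%N; last by rewrite coef0; exact: divp_poly0.
by rewrite coefC; case: (j == 0)%N => //; exact: divp_poly0.
Qed.

Lemma divp_trunc_nat k : divp_trunc 0 k%:R.
Proof.
have -> : k%:R = (k%:R : {poly rat})%:P%:P :> P3 by rewrite !rmorph_nat.
by apply/divp_truncC/divp_poly_nat; rewrite expn0 dvd1n.
Qed.

Lemma divp_truncX m e A : divp_trunc m A -> divp_trunc (m * e) (A ^+ e).
Proof.
move=> hA; elim: e => [|e IH]; first by rewrite muln0 expr0; exact: (divp_trunc_nat 1).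
by rewrite exprS mulnS; apply: divp_truncM.
Qed.

Lemma divp_truncX0 e A : divp_trunc 0 A -> divp_trunc 0 (A ^+ e).
Proof. by rewrite -{2}(mul0n e); apply: divp_truncX. Qed.

Lemma divp_trunc_mulrn m e k A :
  (p ^ e %| k)%N -> divp_trunc m A -> divp_trunc (m + e) (A *+ k).
Proof.
move=> hk hA i j hi; rewrite !coefMn -mulr_natr.
by apply: divp_polyM; [exact: hA|exact: divp_poly_nat].
Qed.

Lemma divp_trunc_logcoef s m k A :
  divp_trunc (m + k) A -> divp_trunc m ((logcoef p s k)%:P%:P * A).
Proof. by move=> hA i j hi; rewrite coef2CM; apply: (divp_poly_logcoef p_prime); apply: hA. Qed.

Lemma divp_trunc_x : divp_trunc 0 xx.
Proof.
move=> i j _; rewrite coefX -(rmorph_nat (@polyC _)) coefC.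
case: (j == 0)%N; last exact: divp_poly0.
by apply: divp_poly_nat; rewrite expn0 dvd1n.
Qed.

Lemma divp_trunc_y : divp_trunc 0 yy.
Proof.
move=> i j _; rewrite coefC; case: (i == 0)%N; last by rewrite coef0; exact: divp_poly0.
by rewrite coefX; apply: divp_poly_nat; rewrite expn0 dvd1n.
Qed.

Lemma divp_trunc_v : divp_trunc 0 vv.
Proof.
apply: divp_truncC => n; rewrite coefX.
by apply: divp_rat_nat; rewrite expn0 dvd1n.
Qed.

Lemma divp_trunc_XnM m A : divp_trunc m (xx ^+ N * A).
Proof. by move=> i j hi; rewrite coefXnM hi coef0; exact: divp_poly0. Qed.

End TruncatedDivisibility.

Definition vanishes_below (d : nat) (A : P3) : Prop :=
  forall i j, (i + j < d)%N -> A`_i`_j = 0.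

Lemma vanishes_below_weaken d e A : (e <= d)%N -> vanishes_below d A -> vanishes_below e A.
Proof. by move=> le_ed hA i j h; apply: hA; apply: leq_trans le_ed. Qed.

Lemma vanishes_below_sum d I (r : seq I) (P : pred I) (F : I -> P3) :
  (forall i, P i -> vanishes_below d (F i)) -> vanishes_below d (\sum_(i <- r | P i) F i).
Proof.
apply: big_ind => [i j _|A B hA hB i j h]; first by rewrite !coef0.
by rewrite !coefD hA // hB // addr0.
Qed.

Lemma vanishes_belowM d e A B :
  vanishes_below d A -> vanishes_below e B -> vanishes_below (d + e) (A * B).
Proof.
move=> hA hB i j h; rewrite coef2M; apply: big1 => a _; apply: big1 => b _.
have ha : (a <= i)%N by rewrite -ltnS. have hb : (b <= j)%N by rewrite -ltnS.
have [hab|hab] := ltnP (a + b) d; first by rewrite hA // mul0r.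
by rewrite hB ?mulr0 //; lia.
Qed.

Lemma vanishes_belowX d e A : vanishes_below d A -> vanishes_below (d * e) (A ^+ e).
Proof.
move=> hA; elim: e => [|e IH]; first by rewrite muln0.
by rewrite exprS mulnS; apply: vanishes_belowM.
Qed.

Lemma vanishes_below1 (A : P3) : A`_0`_0 = 0 -> vanishes_below 1 A.
Proof. by move=> h [|i] [|j]. Qed.

(* If A and B have no constant term and agree below degree t, then for M > 1
   the powers A^M and B^M agree below degree t + 1: this is why the
   coefficients of degree t + 1 of log F only involve F through lower degrees
   besides the linear term. *)
Lemma vanishes_below_subX t (A B : P3) M :
  vanishes_below 1 A -> vanishes_below 1 B -> vanishes_below t (A - B) -> (1 < M)%N ->
  vanishes_below t.+1 (A ^+ M - B ^+ M).
Proof.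
move=> hA hB hAB hM; rewrite subrXX.
apply: (@vanishes_below_weaken (t + M.-1)); first by lia.
apply: vanishes_belowM => //; apply: vanishes_below_sum => i _.
apply: (@vanishes_below_weaken (1 * (M.-1 - i) + 1 * i)); first by have := ltn_ord i; lia.
by apply: vanishes_belowM; apply: vanishes_belowX.
Qed.

Lemma dvdn_bin_ppow p e K m : prime p -> (0 < m)%N -> (m < p ^ e.+1)%N ->
  (p ^ (K - e) %| 'C(p ^ K, m))%N.
Proof.
move=> p_prime m_gt0 m_lt.
have [->|C_neq0] := eqVneq 'C(p ^ K, m) 0%N; first exact: dvdn0.
have C_gt0 : (0 < 'C(p ^ K, m))%N by rewrite lt0n.
have dvd_mC : (p ^ K %| m * 'C(p ^ K, m))%N.
  by case: m m_gt0 {m_lt C_neq0 C_gt0} => // m _; rewrite -mul_bin_diag dvdn_mulr.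
have log_m : (logn p m <= e)%N.
  have : (p ^ logn p m <= m)%N by apply: dvdn_leq => //; rewrite pfactor_dvdn.
  by move=> /leq_ltn_trans /(_ m_lt); rewrite ltn_exp2l ?prime_gt1.
move: dvd_mC; rewrite pfactor_dvdn ?muln_gt0 ?m_gt0 // lognM // => hK.
by rewrite pfactor_dvdn //; lia.
Qed.

Lemma exprD_subl (R : comPzRingType) (a c : R) n :
  (a + c) ^+ n - a ^+ n = \sum_(i < n) (a ^+ (n - i.+1) * c ^+ i.+1) *+ 'C(n, i.+1).
Proof. by rewrite exprDn big_ord_recl /= subn0 expr0 mulr1 bin0 mulr1n addrC addKr. Qed.

Lemma exprD_sub2 (R : comPzRingType) (a b : R) n :
  (a + b) ^+ n.+1 - a ^+ n.+1 - b ^+ n.+1 =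
  \sum_(i < n) (a ^+ (n - i) * b ^+ i.+1) *+ 'C(n.+1, i.+1).
Proof.
rewrite exprD_subl big_ord_recr /= subnn expr0 mul1r binn mulr1n addrK.
by apply: eq_bigr => i _; rewrite subSS.
Qed.

Section PowersModP.
Variables (p N : nat) (p_prime : prime p).
Local Notation divp_trunc := (divp_trunc p N).

Lemma divp_trunc_powD r e A c : (1 <= r)%N -> divp_trunc 0 A -> divp_trunc r c ->
  divp_trunc (r + e) ((A + c) ^+ (p ^ e) - A ^+ (p ^ e)).
Proof.
move=> r_gt0 hA hc; elim: e => [|e IH]; first by rewrite addn0 !expn0 !expr1 addrC addKr.
set B := _ - _ in IH.
have -> : (A + c) ^+ (p ^ e.+1) = (A ^+ (p ^ e) + B) ^+ p.
  by rewrite /B [A ^+ _ + _]addrC subrK expnSr exprM.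
rewrite expnSr exprM exprD_subl; apply: divp_trunc_sum => i _.
have hApe : divp_trunc 0 ((A ^+ (p ^ e)) ^+ (p - i.+1)) by do 2!apply: divp_truncX0.
have hBi : divp_trunc ((r + e) * i.+1) (B ^+ i.+1) by apply: divp_truncX.
have [lt_ip|le_pi] := ltnP i.+1 p.
  apply: (@divp_trunc_weaken _ _ (0 + (r + e) * i.+1 + 1)); first by nia.
  apply: divp_trunc_mulrn; last exact: divp_truncM.
  by rewrite expn1 prime_dvd_bin.
apply: (@divp_trunc_weaken _ _ (0 + (r + e) * i.+1 + 0)).
  have := prime_gt1 p_prime; have -> : i.+1 = p by have := ltn_ord i; lia.
  by nia.
by apply: divp_trunc_mulrn; [rewrite expn0 dvd1n|exact: divp_truncM].
Qed.

Lemma divp_trunc_frobenius a b : divp_trunc 0 a -> divp_trunc 0 b ->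
  divp_trunc 1 ((a + b) ^+ p - a ^+ p - b ^+ p).
Proof.
move=> ha hb; have := exprD_sub2 a b p.-1; rewrite prednK ?prime_gt0 // => ->.
apply: divp_trunc_sum => i _; rewrite -[1%N]add0n; apply: divp_trunc_mulrn.
  by rewrite expn1 prime_dvd_bin //; have := ltn_ord i; lia.
by rewrite -[0%N]addn0; apply: divp_truncM; apply: divp_truncX0.
Qed.

Lemma divp_trunc_frobenius_iter a b e : divp_trunc 0 a -> divp_trunc 0 b ->
  divp_trunc 1 ((a + b) ^+ (p ^ e) - a ^+ (p ^ e) - b ^+ (p ^ e)).
Proof.
move=> ha hb; elim: e => [|e IH].
  by rewrite expn0 !expr1 (_ : a + b - a - b = 0); [exact: divp_trunc0|ring].
set a' := a ^+ (p ^ e); set b' := b ^+ (p ^ e); set E := _ - _ - _ in IH.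
have ha' : divp_trunc 0 a' by apply: divp_truncX0.
have hb' : divp_trunc 0 b' by apply: divp_truncX0.
have -> : (a + b) ^+ (p ^ e.+1) = (a' + b' + E) ^+ p.
  by rewrite expnSr exprM /E /a' /b'; congr (_ ^+ _); ring.
rewrite expnSr !exprM -/a' -/b'.
have -> : (a' + b' + E) ^+ p - a' ^+ p - b' ^+ p =
    ((a' + b' + E) ^+ p - (a' + b') ^+ p) + ((a' + b') ^+ p - a' ^+ p - b' ^+ p) by ring.
apply: divp_truncD; last exact: divp_trunc_frobenius.
apply: (@divp_trunc_weaken _ _ (1 + 1)) => //.
by rewrite -{2}(expn1 p); apply: divp_trunc_powD => //; apply: divp_truncD.
Qed.

End PowersModP.

Definition log_tail (p s t : nat) (Z : P3) : P3 :=
  \sum_(k < t) (logcoef p s k.+1)%:P%:P * Z ^+ (p ^ (k.+1 * s)).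

Lemma log_tailB p s t A B : log_tail p s t A - log_tail p s t B =
  \sum_(k < t) (logcoef p s k.+1)%:P%:P * (A ^+ (p ^ (k.+1 * s)) - B ^+ (p ^ (k.+1 * s))).
Proof. by rewrite /log_tail -sumrB; apply: eq_bigr => k _; rewrite mulrBr. Qed.

Lemma log_tail_local p s u t A B : (1 < p)%N -> (0 < s)%N ->
  vanishes_below 1 A -> vanishes_below 1 B -> vanishes_below t (A - B) ->
  vanishes_below t.+1 (log_tail p s u A - log_tail p s u B).
Proof.
move=> p_gt1 s_gt0 hA hB hAB; rewrite log_tailB; apply: vanishes_below_sum => k _ i j hij.
rewrite coef2CM (vanishes_below_subX hA hB hAB) ?mulr0 //.
by rewrite -{1}(expn0 p) ltn_exp2l // muln_gt0.
Qed.

Lemma logcoef0 p s : logcoef p s 0 = 1.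
Proof. by rewrite /logcoef mul0n expn0 subnn div0n expr0 mul1r invr1 polyC1. Qed.

Definition binp (p l : nat) : rat := 'C(p, l)%:R / p%:R.

Definition Cpoly (p s : nat) : P3 := \sum_(1 <= l < p)
  (binp p l)%:P%:P%:P * xx ^+ (p ^ (s - 1) * l) * yy ^+ (p ^ (s - 1) * (p - l)).

(* C(x, y) / x^q, a series with coefficients in Z_(p): every monomial of C is
   divisible by x^q, so that powers (v C)^n with n >= q are divisible by x^N. *)
Definition Cpoly_red (p s : nat) : P3 := \sum_(1 <= l < p)
  (binp p l)%:P%:P%:P * xx ^+ (p ^ (s - 1) * (l - 1)) * yy ^+ (p ^ (s - 1) * (p - l)).

Definition Gpoly (p s : nat) : P3 := xx + yy - vv * Cpoly p s.

Lemma coef_monomial (c : {poly rat}) a b i j :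
  (c%:P%:P * xx ^+ a * yy ^+ b)`_i`_j = c * ((i == a) && (j == b))%:R.
Proof.
rewrite /xx /yy -mulrA [_ * _ ^+ b]mulrC mulrA -rmorphXn -rmorphM /= coefMXn.
have [lt_ia|le_ai] := ltnP i a.
  by rewrite coef0 (_ : (i == a) = false) ?mulr0 //; apply/negbTE; rewrite neq_ltn lt_ia.
rewrite coefC; case: eqP => [ia0|ia0].
  have -> : i = a by lia.
  by rewrite eqxx /= coefCM coefXn.
by rewrite coef0 (_ : (i == a) = false) ?mulr0 //; apply/negbTE/eqP; lia.
Qed.

Lemma coef_Gpoly p s i j : (Gpoly p s)`_i`_j = rhs p s i j.
Proof.
rewrite /Gpoly /rhs !coefB !coefD; congr (_ + _ - _).
- by rewrite /xx coefX /ps2_X; case: (i == 1)%N; rewrite ?coef1 ?coef0.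
- by rewrite /yy coefC /ps2_Y; case: (i == 0)%N; rewrite ?coefX ?coef0.
rewrite /Cpoly !mulr_sumr !coef_sum; apply: eq_bigr => l _.
by rewrite /vv !mulrA -!rmorphM /= coef_monomial.
Qed.

Section Approximation.
Variables (p s : nat) (p_prime : prime p) (s_gt1 : (1 < s)%N).
Local Notation q := (p ^ (s - 1))%N.
Local Notation N := (p ^ (2 * (s - 1)))%N.
Local Notation divp_trunc := (divp_trunc p N).

Lemma N_eq_qq : N = (q * q)%N.
Proof. by rewrite -expnD; congr expn; lia. Qed.

Lemma Cpoly_factor : Cpoly p s = xx ^+ q * Cpoly_red p s.
Proof.
rewrite /Cpoly /Cpoly_red mulr_sumr; apply: eq_big_nat => l /andP[l_gt0 _].
have -> : (q * l = q + q * (l - 1))%N by rewrite -{2}(muln1 q) -mulnDr; congr (_ * _); lia.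
by rewrite exprD; ring.
Qed.

Lemma Gpoly00 : (Gpoly p s)`_0`_0 = 0.
Proof.
rewrite /Gpoly !coefB !coefD /xx /yy coefX coefC /= /vv coef2CM Cpoly_factor /xx coefXnM.
by rewrite expn_gt0 prime_gt0 // coef0 mulr0 coefC /= coefX /= add0r subr0.
Qed.

Lemma binp_integral l : (0 < l < p)%N -> divp_rat p 0 (binp p l).
Proof.
move=> hl; rewrite /binp -{2}(expn1 p); apply: (@divp_rat_div p p_prime 0 1).
by apply: divp_rat_nat; rewrite add0n expn1 prime_dvd_bin.
Qed.

Lemma divp_trunc_Cpoly_red : divp_trunc 0 (Cpoly_red p s).
Proof.
rewrite /Cpoly_red big_nat_cond; apply: divp_trunc_sum => l /andP[hl _].
rewrite -[0%N]addn0; apply: divp_truncM; last exact/divp_truncX0/divp_trunc_y.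
rewrite -[0%N]addn0; apply: divp_truncM; last exact/divp_truncX0/divp_trunc_x.
by apply/divp_truncC/divp_polyC/binp_integral.
Qed.

Lemma divp_trunc_Cpoly : divp_trunc 0 (Cpoly p s).
Proof.
rewrite Cpoly_factor -[0%N]addn0; apply: divp_truncM; last exact: divp_trunc_Cpoly_red.
exact/divp_truncX0/divp_trunc_x.
Qed.

Lemma divp_trunc_Gpoly : divp_trunc 0 (Gpoly p s).
Proof.
apply: divp_truncB; first by apply: divp_truncD; [exact: divp_trunc_x|exact: divp_trunc_y].
by rewrite -[0%N]addn0; apply: divp_truncM; [exact: divp_trunc_v|exact: divp_trunc_Cpoly].
Qed.

Lemma binp_mul_p l : (binp p l)%:P%:P%:P * p%:R = 'C(p, l)%:R :> P3.
Proof.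
have p_neq0 : p%:R != 0 :> rat by rewrite pnatr_eq0 -lt0n prime_gt0.
rewrite -[p%:R](rmorph_nat ((@polyC _) \o (@polyC _) \o (@polyC rat))) /=.
rewrite -!rmorphM /= /binp mulfVK //.
by rewrite -[RHS](rmorph_nat ((@polyC _) \o (@polyC _) \o (@polyC rat))).
Qed.

(* The defining property of C: (x + y)^(p^s) = x^(p^s) + y^(p^s) + p C(x, y) mod p^2,
   obtained from (x + y)^q = x^q + y^q mod p by raising to the p-th power. *)
Lemma frobenius_Cpoly :
  divp_trunc 2 ((xx + yy) ^+ (p ^ s) - xx ^+ (p ^ s) - yy ^+ (p ^ s) - Cpoly p s *+ p).
Proof.
have ps_eq : (p ^ s = q * p)%N by rewrite -expnSr; congr expn; lia.
have hx : divp_trunc 0 xx by exact: divp_trunc_x.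
have hy : divp_trunc 0 yy by exact: divp_trunc_y.
have hE : divp_trunc 1 ((xx + yy) ^+ q - xx ^+ q - yy ^+ q).
  by apply: divp_trunc_frobenius_iter.
set E := _ - _ - _ in hE; set u := yy ^+ q + xx ^+ q.
have u_p : u ^+ p - (yy ^+ q) ^+ p - (xx ^+ q) ^+ p = Cpoly p s *+ p.
  have := exprD_sub2 (yy ^+ q) (xx ^+ q) p.-1; rewrite prednK ?prime_gt0 // => ->.
  rewrite /Cpoly -sumrMnl big_add1 big_mkord; apply: eq_bigr => i _.
  have -> : (p - i.+1 = p.-1 - i)%N by have := ltn_ord i; lia.
  by rewrite -!exprM -mulr_natl -[RHS]mulr_natl -binp_mul_p; ring.
rewrite ps_eq !exprM.
have -> : (xx + yy) ^+ q = u + E by rewrite /E /u; ring.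
have -> : (u + E) ^+ p - (xx ^+ q) ^+ p - (yy ^+ q) ^+ p - Cpoly p s *+ p =
   ((u + E) ^+ p - u ^+ p) + (u ^+ p - (yy ^+ q) ^+ p - (xx ^+ q) ^+ p - Cpoly p s *+ p).
  by ring.
rewrite u_p subrr addr0.
have hu : divp_trunc 0 u by apply: divp_truncD; apply: divp_truncX0.
by have := divp_trunc_powD p_prime 1 (leqnn 1) hu hE; rewrite expn1.
Qed.

(* G^(p^(ks)) = (x + y)^(p^(ks)) mod p^(k+1): the binomial coefficients of the
   small powers of v C are divisible enough, and the large ones are divisible
   by x^(q q) = x^N. *)
Lemma Gpoly_pow k : (0 < k)%N ->
  divp_trunc k.+1 (Gpoly p s ^+ (p ^ (k * s)) - (xx + yy) ^+ (p ^ (k * s))).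
Proof.
move=> k_gt0; rewrite /Gpoly exprD_subl; apply: divp_trunc_sum => i _.
have hxy : divp_trunc 0 ((xx + yy) ^+ (p ^ (k * s) - i.+1)).
  by apply/divp_truncX0/divp_truncD; [exact: divp_trunc_x|exact: divp_trunc_y].
have [lt_iq|le_qi] := ltnP i.+1 q.
  have hW : divp_trunc 0 ((- (vv * Cpoly p s)) ^+ i.+1).
    apply/divp_truncX0/divp_truncN; rewrite -[0%N]addn0.
    by apply: divp_truncM; [exact: divp_trunc_v|exact: divp_trunc_Cpoly].
  apply: (@divp_trunc_weaken _ _ (0 + 0 + (k * s - (s - 2)))); first by nia.
  apply: divp_trunc_mulrn; last exact: divp_truncM.
  by apply: dvdn_bin_ppow => //; have -> : (s - 2).+1 = (s - 1)%N by lia.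
have -> : (- (vv * Cpoly p s)) ^+ i.+1 =
    xx ^+ N * ((- (vv * Cpoly_red p s)) ^+ i.+1 * xx ^+ (q * i.+1 - N)).
  rewrite Cpoly_factor.
  have -> : - (vv * (xx ^+ q * Cpoly_red p s)) = xx ^+ q * (- (vv * Cpoly_red p s)) by ring.
  rewrite exprMn -exprM.
  have -> : (q * i.+1 = N + (q * i.+1 - N))%N.
    by rewrite N_eq_qq subnKC // leq_mul2l le_qi orbT.
  by rewrite exprD addKn; ring.
by rewrite mulrCA -mulrnAr; apply: divp_trunc_XnM.
Qed.

Lemma xy_pow_sub_y k : (1 < k)%N ->
  divp_trunc k.+1 ((xx + yy) ^+ (p ^ (k * s)) - yy ^+ (p ^ (k * s))).
Proof.
move=> k_gt1; rewrite [xx + yy]addrC exprD_subl; apply: divp_trunc_sum => i _.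
have [lt_iN|le_Ni] := ltnP i.+1 N.
  apply: (@divp_trunc_weaken _ _ (0 + 0 + (k * s - (2 * s - 3)))); first by nia.
  apply: divp_trunc_mulrn.
    by apply: dvdn_bin_ppow => //; have -> : (2 * s - 3).+1 = (2 * (s - 1))%N by lia.
  by apply: divp_truncM; apply: divp_truncX0; [exact: divp_trunc_y|exact: divp_trunc_x].
have -> : xx ^+ i.+1 = xx ^+ N * xx ^+ (i.+1 - N) by rewrite -exprD subnKC.
by rewrite mulrCA -mulrnAr; apply: divp_trunc_XnM.
Qed.

Lemma x_pow_vanish k m : (1 < k)%N -> divp_trunc m (xx ^+ (p ^ (k * s))).
Proof.
move=> k_gt1; have le_N : (N <= p ^ (k * s))%N by apply: leq_pexp2l; [exact: prime_gt0|nia].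
by rewrite -(subnKC le_N) exprD; apply: divp_trunc_XnM.
Qed.

Lemma logcoef1_mulrn (Z : P3) : (logcoef p s 1)%:P%:P * (Z *+ p) = vv * Z.
Proof.
have p_neq0 : p%:R != 0 :> rat by rewrite pnatr_eq0 -lt0n prime_gt0.
rewrite /logcoef; have -> : ((p ^ (1 * s) - 1) %/ (p ^ s - 1) = 1)%N.
  by rewrite mul1n divnn subn_gt0 -{1}(expn0 p) ltn_exp2l ?prime_gt1 //; lia.
rewrite expr1 (_ : Z *+ p = (p%:R : rat)%:P%:P%:P * Z); last by rewrite !rmorph_nat mulr_natl.
rewrite mulrA /vv; congr (_ * _).
by rewrite -!rmorphM /= -mulrA -rmorphM /= expn1 mulVf // mulr1.
Qed.

Lemma log_tail_sub3 t A B C :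
  log_tail p s t A - log_tail p s t B - log_tail p s t C =
  \sum_(k < t) (logcoef p s k.+1)%:P%:P *
    (A ^+ (p ^ (k.+1 * s)) - B ^+ (p ^ (k.+1 * s)) - C ^+ (p ^ (k.+1 * s))).
Proof. by rewrite log_tailB /log_tail -sumrB; apply: eq_bigr => k _; rewrite -mulrBr. Qed.

(* The heart of the matter: G satisfies the logarithm equation mod p modulo x^N,
   i.e. log G - log x - log y = 0 mod p (the linear terms give - v C, which is
   cancelled by the k = 1 term by frobenius_Cpoly; the terms k >= 2 vanish). *)
Lemma log_tail_Gpoly t : divp_trunc 1
  (log_tail p s t.+1 (Gpoly p s) - log_tail p s t.+1 xx - log_tail p s t.+1 yy - vv * Cpoly p s).
Proof.
rewrite log_tail_sub3 big_ord_recl /= -addrAC; apply: divp_truncD.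
  rewrite -logcoef1_mulrn -mulrBr; apply: (@divp_trunc_logcoef p N p_prime s 1).
  rewrite mul1n.
  have -> : Gpoly p s ^+ (p ^ s) - xx ^+ (p ^ s) - yy ^+ (p ^ s) - Cpoly p s *+ p =
      (Gpoly p s ^+ (p ^ (1 * s)) - (xx + yy) ^+ (p ^ (1 * s))) +
      ((xx + yy) ^+ (p ^ s) - xx ^+ (p ^ s) - yy ^+ (p ^ s) - Cpoly p s *+ p).
    by rewrite mul1n; ring.
  by apply: divp_truncD; [exact: Gpoly_pow|exact: frobenius_Cpoly].
apply: divp_trunc_sum => k _; apply: (@divp_trunc_logcoef p N p_prime s 1).
have -> : Gpoly p s ^+ (p ^ (k.+2 * s)) - xx ^+ (p ^ (k.+2 * s)) - yy ^+ (p ^ (k.+2 * s)) =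
  (Gpoly p s ^+ (p ^ (k.+2 * s)) - (xx + yy) ^+ (p ^ (k.+2 * s))) +
  ((xx + yy) ^+ (p ^ (k.+2 * s)) - yy ^+ (p ^ (k.+2 * s))) - xx ^+ (p ^ (k.+2 * s)) by ring.
rewrite add1n; apply: divp_truncB; last exact: x_pow_vanish.
by apply: divp_truncD; [exact: Gpoly_pow|exact: xy_pow_sub_y].
Qed.

(* A perturbation of order p of a p-integral series changes the tail of its
   logarithm only by a multiple of p: c_k loses k levels, the p^(ks)-th power gains ks. *)
Lemma log_tail_perturb t Z D : divp_trunc 0 Z -> divp_trunc 1 D ->
  divp_trunc 1 (log_tail p s t (Z + D) - log_tail p s t Z).
Proof.
move=> hZ hD; rewrite log_tailB; apply: divp_trunc_sum => k _.
apply: (@divp_trunc_logcoef p N p_prime s 1 k.+1).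
apply: (@divp_trunc_weaken _ _ (1 + k.+1 * s)); first by nia.
by apply: divp_trunc_powD.
Qed.

End Approximation.

Definition trunc (n : nat) (A : ps2) : P3 := \poly_(i < n) \poly_(j < n) A i j.

Lemma coef_trunc n A i j : (trunc n A)`_i`_j = if ((i < n) && (j < n))%N then A i j else 0.
Proof.
rewrite /trunc coef_poly; case: (ltnP i n) => /= hi; last by rewrite coef0.
by rewrite coef_poly.
Qed.

(* Coefficients of powers of F of bidegree (i, j) only see coefficients of F of
   bidegree <= (i, j), hence can be computed on any truncation containing (i, j). *)
Lemma ps2_exp_trunc n A m i j : (i < n)%N -> (j < n)%N ->
  ps2_exp A m i j = ((trunc n A) ^+ m)`_i`_j.
Proof.
elim: m i j => [|m IH] i j hi hj.
  rewrite expr0 /ps2_exp /= /ps2_one coef1; case: (i == 0)%N; last by rewrite coef0.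
  by rewrite coef1.
rewrite exprS /ps2_exp iterS -/(ps2_exp A m) coef2M /ps2_mul.
apply: eq_bigr => a _; apply: eq_bigr => b _.
have ha : (a <= i)%N by rewrite -ltnS. have hb : (b <= j)%N by rewrite -ltnS.
rewrite coef_trunc (leq_ltn_trans ha hi) (leq_ltn_trans hb hj) IH //.
  exact: leq_ltn_trans (leq_subr a i) hi.
exact: leq_ltn_trans (leq_subr b j) hj.
Qed.

Lemma trunc_X n : (1 < n)%N -> trunc n ps2_X = xx.
Proof.
move=> n_gt1; apply/polyP => i; apply/polyP => j; rewrite coef_trunc /xx coefX /ps2_X.
have [i_lt|i_ge] := ltnP i n; last first.
  by rewrite (_ : (i == 1)%N = false) ?coef0 //; apply/negbTE/eqP; lia.
have [j_lt|j_ge] := ltnP j n; last first.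
  by case: (i == 1)%N; rewrite ?coef1 ?coef0 // (_ : (j == 0)%N = false) //; apply/negbTE/eqP; lia.
by case: (i == 1)%N; rewrite ?coef1 ?coef0.
Qed.

Lemma trunc_Y n : (1 < n)%N -> trunc n ps2_Y = yy.
Proof.
move=> n_gt1; apply/polyP => i; apply/polyP => j; rewrite coef_trunc /yy coefC /ps2_Y.
have [i_lt|i_ge] := ltnP i n; last first.
  by rewrite (_ : (i == 0)%N = false) ?coef0 //; apply/negbTE/eqP; lia.
have [j_lt|j_ge] := ltnP j n; last first.
  by case: (i == 0)%N; rewrite ?coefX ?coef0 // (_ : (j == 1)%N = false) //; apply/negbTE/eqP; lia.
by case: (i == 0)%N; rewrite ?coefX ?coef0.
Qed.

Lemma log_of_trunc p s n F i j : (i < n)%N -> (j < n)%N ->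
  log_of p s F i j = F i j + (log_tail p s (i + j) (trunc n F))`_i`_j.
Proof.
move=> hi hj; rewrite /log_of big_ord_recl logcoef0 mul0n expn0 mul1r.
rewrite (ps2_exp_trunc _ _ hi hj) expr1 coef_trunc hi hj /log_tail !coef_sum; congr (_ + _).
by apply: eq_bigr => k _; rewrite coef2CM (ps2_exp_trunc _ _ hi hj).
Qed.

Section Congruence.
Variables (p s : nat) (p_prime : prime p) (s_gt1 : (1 < s)%N).
Local Notation N := (p ^ (2 * (s - 1)))%N.

(* Write A - G = (log A - log x - log y) - (tail A - tail B) - (tail B - tail G)
   - (tail G - tail x - tail y - v C) with B = G + D: the first two summands
   vanish in degree (i, j) and the last two are multiples of p. *)
Lemma congruence_step t i j (A D : P3) :
  (i + j = t.+1)%N -> (i < N)%N ->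
  vanishes_below 1 A -> D`_0`_0 = 0 -> divp_trunc p N 1 D ->
  vanishes_below t.+1 (A - (Gpoly p s + D)) ->
  (A + log_tail p s t.+1 A)`_i`_j =
    (xx + log_tail p s t.+1 xx + (yy + log_tail p s t.+1 yy))`_i`_j ->
  divp_poly p 1 (A - Gpoly p s)`_i`_j.
Proof.
move=> hij hi hA hD0 hD hAB hlog.
set G := Gpoly p s; set tail := log_tail p s t.+1.
have hB : vanishes_below 1 (G + D).
  by apply: vanishes_below1; rewrite coefD (coefD G`_0) Gpoly00 // hD0 addr0.
have tail_AB : (tail A - tail (G + D))`_i`_j = 0.
  by apply: (log_tail_local t.+1 (prime_gt1 p_prime) (ltnW s_gt1) hA hB hAB); lia.
have -> : A - G = (A + tail A - (xx + tail xx + (yy + tail yy))) - (tail A - tail (G + D))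
    - (tail (G + D) - tail G) - (tail G - tail xx - tail yy - vv * Cpoly p s).
  by rewrite /G /Gpoly; ring.
rewrite !coefB in tail_AB *; rewrite hlog tail_AB subrr subrr sub0r.
apply: divp_polyB; [apply: divp_polyN|]; rewrite -!coefB.
  by apply: log_tail_perturb => //; exact: divp_trunc_Gpoly.
exact: log_tail_Gpoly.
Qed.

Lemma rhs00 : rhs p s 0 0 = 0.
Proof. by rewrite -coef_Gpoly Gpoly00. Qed.

Variables (F : ps2) (F_FGL : is_KsFGL p s F).

(* The theorem for F, by strong induction on the total degree: in degree t + 1,
   apply [congruence_step] to the truncation A of F and to the truncation D of
   F - G restricted to degrees <= t, which is a multiple of p by induction. *)
Lemma KsFGL_congruence t i j : (i < N)%N -> (i + j = t)%N ->
  divp_poly p 1 (F i j - rhs p s i j).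
Proof.
elim/ltn_ind: t i j => t IH i j hi hij.
have F00 : F 0 0 = 0 := F_FGL.1.
case: t IH hij => [|t] IH hij.
  have [-> ->] : i = 0%N /\ j = 0%N by lia.
  by rewrite F00 rhs00 subrr; exact: divp_poly0.
have [hin hjn] : (i < t.+2)%N /\ (j < t.+2)%N by lia.
set A := trunc t.+2 F.
set D := trunc t.+2 (fun a b => if (a + b < t.+1)%N then F a b - rhs p s a b else 0).
have -> : F i j - rhs p s i j = (A - Gpoly p s)`_i`_j.
  by rewrite coefB (coefB A`_i) coef_Gpoly /A coef_trunc hin hjn.
apply: (congruence_step (D := D) hij hi).
- by apply: vanishes_below1; rewrite /A coef_trunc F00.
- by rewrite /D coef_trunc /= F00 rhs00 subrr.
- move=> a b ha; rewrite /D coef_trunc; case: ifP => _; last exact: divp_poly0.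
  by case: ifP => hab; [exact: (IH (a + b)%N)|exact: divp_poly0].
- move=> a b hab; rewrite coefB (coefB A`_a) (coefD (Gpoly p s)) (coefD (Gpoly p s)`_a).
  rewrite coef_Gpoly /A /D !coef_trunc.
  have -> : ((a < t.+2) && (b < t.+2))%N = true by apply/andP; split; lia.
  by rewrite hab; ring.
have := F_FGL.2 i j; rewrite !(log_of_trunc _ _ _ hin hjn) hij.
by rewrite -(trunc_X (n := t.+2)) // -(trunc_Y (n := t.+2)) // !coefD /A !coef_trunc hin hjn.
Qed.

End Congruence.

(* Existence: log F = log x + log y determines F degree by degree, since in total
   degree t + 1 the equation reads F_ij + (terms in lower degrees of F) = known. *)
Definition log_xy (p s : nat) : ps2 := fun i j => log_of p s ps2_X i j + log_of p s ps2_Y i j.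

(* [FGL_approx p s t] is correct in total degrees <= t. *)
Fixpoint FGL_approx (p s t : nat) : ps2 :=
  match t with
  | 0 => fun _ _ => 0
  | t'.+1 => fun i j =>
      if (i + j == t'.+1)%N
      then log_xy p s i j - (log_of p s (FGL_approx p s t') i j - FGL_approx p s t' i j)
      else FGL_approx p s t' i j
  end.

Definition KsFGL (p s : nat) : ps2 := fun i j => FGL_approx p s (i + j) i j.

Lemma FGL_approx_stable p s t i j : (i + j <= t)%N -> FGL_approx p s t i j = KsFGL p s i j.
Proof.
elim: t => [|t IH] le_t; first by rewrite /KsFGL (_ : (i + j = 0)%N) //; lia.
have [e|ne] := eqVneq (i + j)%N t.+1; first by rewrite /KsFGL e.
by rewrite /= (negbTE ne); apply: IH; lia.
Qed.

Lemma log_xy00 p s : log_xy p s 0 0 = 0.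
Proof.
by rewrite /log_xy !(@log_of_trunc p s 1) // /log_tail !big_ord0 !coef0 /ps2_X /ps2_Y !addr0.
Qed.

Lemma KsFGL_is_KsFGL p s : prime p -> (0 < s)%N -> is_KsFGL p s (KsFGL p s).
Proof.
move=> p_prime s_gt0; split=> // i j; rewrite -/(log_xy p s i j).
case E : (i + j)%N => [|t].
  have [-> ->] : i = 0%N /\ j = 0%N by lia.
  by rewrite (@log_of_trunc p s 1) // /log_tail big_ord0 !coef0 log_xy00 addr0.
have [hin hjn] : (i < t.+2)%N /\ (j < t.+2)%N by lia.
set G := FGL_approx p s t.
have KsFGL_ij : KsFGL p s i j = log_xy p s i j - (log_of p s G i j - G i j).
  by rewrite /KsFGL E /= E eqxx.
rewrite (log_of_trunc _ _ _ hin hjn) KsFGL_ij (log_of_trunc _ _ _ hin hjn).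
rewrite (addrC (G i j)) addrK E.
have G00 : G 0 0 = 0 by rewrite /G FGL_approx_stable.
have h1 : vanishes_below 1 (trunc t.+2 (KsFGL p s)) by apply: vanishes_below1; rewrite coef_trunc.
have h2 : vanishes_below 1 (trunc t.+2 G) by apply: vanishes_below1; rewrite coef_trunc /= G00.
have h12 : vanishes_below t.+1 (trunc t.+2 (KsFGL p s) - trunc t.+2 G).
  move=> a b hab; rewrite !coefB !coef_trunc /G FGL_approx_stable; last by lia.
  by rewrite subrr.
have tails_agree : (log_tail p s t.+1 (trunc t.+2 (KsFGL p s)) -
    log_tail p s t.+1 (trunc t.+2 G))`_i`_j = 0.
  by apply: (log_tail_local _ (prime_gt1 p_prime) s_gt0 h1 h2 h12); lia.
by move/eqP: tails_agree; rewrite !coefB subr_eq0 => /eqP ->; rewrite subrK.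
Qed.

(* Symmetry: the transpose of a solution is a solution, and the right-hand side
   is symmetric, which turns the statement modulo x^N into the one modulo y^N. *)
Lemma ps2_exp_transpose (A B : ps2) m : (forall i j, B i j = A j i) ->
  forall i j, ps2_exp B m i j = ps2_exp A m j i.
Proof.
move=> BA; elim: m => [|m IH] i j; first by rewrite /ps2_exp /= /ps2_one andbC.
rewrite /ps2_exp !iterS -!/(ps2_exp _ m) /ps2_mul exchange_big.
by apply: eq_bigr => b _; apply: eq_bigr => a _; rewrite BA IH.
Qed.

Lemma log_of_transpose p s (A B : ps2) : (forall i j, B i j = A j i) ->
  forall i j, log_of p s B i j = log_of p s A j i.
Proof.
move=> BA i j; rewrite /log_of addnC; apply: eq_bigr => k _.
by rewrite (ps2_exp_transpose _ BA).
Qed.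

Lemma KsFGL_transpose p s F : is_KsFGL p s F -> is_KsFGL p s (fun i j => F j i).
Proof.
move=> [F00 logF]; split=> // i j.
have FT i' j' : (fun a b => F b a) i' j' = F j' i' by [].
rewrite (log_of_transpose _ _ FT) logF.
have XY i' j' : ps2_X i' j' = ps2_Y j' i' by rewrite /ps2_X /ps2_Y andbC.
have YX i' j' : ps2_Y i' j' = ps2_X j' i' by rewrite /ps2_X /ps2_Y andbC.
by rewrite -(log_of_transpose _ _ YX i j) -(log_of_transpose _ _ XY i j) addrC.
Qed.

Lemma rhs_transpose p s i j : (0 < p)%N -> rhs p s j i = rhs p s i j.
Proof.
move=> p_gt0; rewrite /rhs [ps2_X j i + _]addrC.
have -> : ps2_X j i = ps2_Y i j by rewrite /ps2_X /ps2_Y andbC.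
have -> : ps2_Y j i = ps2_X i j by rewrite /ps2_X /ps2_Y andbC.
congr (_ - 'X * _); rewrite big_nat_rev; apply: eq_big_nat => l /andP[l_gt0 l_lt].
have -> : (1 + p - l.+1 = p - l)%N by lia.
have -> : (p - (p - l) = l)%N by lia.
by rewrite bin_sub 1?andbC //; lia.
Qed.

Theorem proposition3p2 (p s : nat) (hp : prime p) (hs : (1 < s)%N) :
  (exists F : ps2, is_KsFGL p s F) /\
  forall F : ps2, is_KsFGL p s F ->
    (forall i j : nat, (i < p ^ (2 * (s - 1)))%N -> cong_mod_p p (F i j) (rhs p s i j)) /\
    (forall i j : nat, (j < p ^ (2 * (s - 1)))%N -> cong_mod_p p (F i j) (rhs p s i j)).
Proof.
split; first by exists (KsFGL p s); apply: KsFGL_is_KsFGL => //; lia.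
move=> F F_FGL; split=> i j hN n; apply: divp_rat1_in_pZp => //.
  exact: (KsFGL_congruence hp hs F_FGL hN (erefl (i + j)%N)).
have := KsFGL_congruence hp hs (KsFGL_transpose F_FGL) hN (erefl (j + i)%N).
by rewrite rhs_transpose ?prime_gt0 //; apply.
Qed.
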